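(* Let $\mathbb{F}\in\{\mathbb{R},\mathbb{C}\}$, let $n\geq 1$, $k\geq 1$, and equip $M_n(\mathbb{F})$ with a norm $\|\cdot\|$. Let $f_1,\dots,f_k\colon GL_n(\mathbb{F})\to GL_n(\mathbb{F})$ be mappings, at least one of which is open (with respect to the topology of $GL_n(\mathbb{F})$ as a subspace of $M_n(\mathbb{F})$). Let $A_1,\dots,A_k\in M_n(\mathbb{F})$. Then for every $\varepsilon>0$ there exist invertible matrices $A_{1\varepsilon},\dots,A_{k\varepsilon}\in GL_n(\mathbb{F})$, each with a simple spectrum, such that $\|A_i-A_{i\varepsilon}\|<\varepsilon$ for all $i=1,\dots,k$, and the product $f_1(A_{1\varepsilon})f_2(A_{2\varepsilon})\cdots f_k(A_{k\varepsilon})$ has a simple spectrum.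
   Context: $M_n(\mathbb{F})$ is the space of $n\times n$ matrices over $\mathbb{F}$ and $GL_n(\mathbb{F})$ the group of invertible ones. A matrix has a simple spectrum if all its eigenvalues (the roots in $\mathbb{C}$ of its characteristic polynomial) have algebraic multiplicity one, i.e. are pairwise distinct. A mapping is open if it sends open sets to open sets. The mappings $f_i$ are not assumed to be continuous or homomorphisms. *)

From mathcomp Require Import all_boot all_algebra.
From mathcomp Require Import reals.
From mathcomp Require Import complex.
Import GRing.Theory Num.Theory.
Set Implicit Arguments. Unset Strict Implicit. Unset Printing Implicit Defensive.
Local Open Scope ring_scope.

(* The scalar field F is either R or C = R[i] (R a model of the reals).
   [toC] is the embedding of F into C (used to take eigenvalues in C),
   [absF] the absolute value of F (used for norm homogeneity). *)
Inductive RorC (R : realType) : forall F : numFieldType, (F -> R[i]) -> (F -> R) -> Prop :=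
 | RorC_R : @RorC R (R : numFieldType) (real_complex R) Num.norm
 | RorC_C : @RorC R (R[i] : numFieldType) id (@ComplexField.Normc.normc R).

Definition mx_norm (R : realType) (F : numFieldType) (absF : F -> R) (n : nat)
  (N : 'M[F]_n -> R) : Prop :=
  [/\ forall A, 0 <= N A,
      forall A, N A = 0 -> A = 0,
      forall (a : F) A, N (a *: A) = absF a * N A
    & forall A B, N (A + B) <= N A + N B].

Definition GL_open (R : realType) (F : numFieldType) (n : nat)
  (N : 'M[F]_n -> R) (U : 'M[F]_n -> Prop) : Prop :=
  (forall A, U A -> A \in unitmx) /\
  (forall A, U A -> exists r : R, 0 < r /\
      forall B, B \in unitmx -> N (B - A) < r -> U B).

(* f (a total function on matrices) restricts to a map GL_n(F) -> GL_n(F);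
   its values outside GL_n(F) play no role. *)
Definition GL_map (F : numFieldType) (n : nat) (f : 'M[F]_n -> 'M[F]_n) : Prop :=
  forall A, A \in unitmx -> f A \in unitmx.

Definition open_GL_map (R : realType) (F : numFieldType) (n : nat)
  (N : 'M[F]_n -> R) (f : 'M[F]_n -> 'M[F]_n) : Prop :=
  forall U, GL_open N U -> GL_open N (fun B => exists A, U A /\ f A = B).

(* simple spectrum: every complex root of the characteristic polynomial
   has algebraic multiplicity (at most, hence exactly) one. *)
Definition simple_spectrum (R : realType) (F : numFieldType) (toC : F -> R[i])
  (n : nat) (A : 'M[F]_n) : Prop :=
  forall z : R[i], (mup z (map_poly toC (char_poly A)) <= 1)%N.

From mathcomp Require Import all_boot all_algebra.
From mathcomp Require Import reals complex.
From mathcomp Require Import mpoly.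
From mathcomp Require Import boolp classical_sets.
From mathcomp Require Import separable.
From mathcomp Require Import ring lra.
Import GRing.Theory Num.Theory order.Order.TTheory.
Set Implicit Arguments. Unset Strict Implicit. Unset Printing Implicit Defensive.
Local Open Scope ring_scope.

(* The polynomial det_disc X = det X * Res(chi_X, chi_X') in the entries of X is
   nonzero exactly when X is invertible with a separable, hence simple,
   characteristic polynomial. Its non-vanishing set is open for any norm, because
   over the complete field F every norm bounds the matrix entries, and dense,
   because on the segment from any M to diag(1, ..., n+1) it restricts to a
   nonzero polynomial in the parameter. Perturb every A_i into this set. The
   admissible perturbations of A_i0 form an open subset of GL_n, which f_i0 maps
   onto an open neighbourhood of f_i0(B_i0); since the product with its i0-th
   factor replaced by Y is L Y R for fixed invertible L and R, density applied to
   L Y R provides a suitable Y = f_i0(X) in that neighbourhood. *)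

(** * Determinant times discriminant *)

Lemma rmorph_resultant (aR rR : nzRingType) (f : {rmorphism aR -> rR}) (p q : {poly aR}) :
    f (lead_coef p) != 0 -> f (lead_coef q) != 0 ->
  f (resultant p q) = resultant (map_poly f p) (map_poly f q).
Proof.
move=> nz_fp nz_fq; rewrite /resultant /Sylvester_mx !size_map_poly_id0 //.
rewrite -det_map_mx /= map_col_mx; congr (\det (col_mx _ _));
  by apply: map_lin1_mx => v; rewrite map_poly_rV rmorphM /= map_rVpoly.
Qed.

Lemma lead_coef_deriv_monic (R : nzRingType) (p : {poly R}) d :
  p \is monic -> size p = d.+2 -> (d.+1)%:R != 0 :> R ->
  lead_coef p^`() = (d.+1)%:R.
Proof.
move=> p_monic size_p d1_neq0.
have lead_p : p`_d.+1 *+ d.+1 = (d.+1)%:R.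
  by have := monicP p_monic; rewrite lead_coefE size_p /= => ->.
have size_p' : size p^`() = d.+1.
  by rewrite /deriv size_p; apply: size_poly_eq; rewrite lead_p.
by rewrite lead_coefE size_p' coef_deriv lead_p.
Qed.

Definition det_disc (R : comNzRingType) m (X : 'M[R]_m.+1) : R :=
  \det X * resultant (char_poly X) (char_poly X)^`().

Lemma rmorph_det_disc (aR rR : comNzRingType) (f : {rmorphism aR -> rR}) m
    (X : 'M[aR]_m.+1) :
  (m.+1)%:R != 0 :> rR -> f (det_disc X) = det_disc (map_mx f X).
Proof.
move=> nz_rR.
have nz_aR : (m.+1)%:R != 0 :> aR.
  by apply: contra nz_rR => /eqP h; rewrite -(rmorph_nat f) h rmorph0.
have mon := char_poly_monic X.
have size_chi : size (char_poly X) = m.+2 by rewrite size_char_poly.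
rewrite /det_disc rmorphM det_map_mx -map_char_poly deriv_map rmorph_resultant //.
- by rewrite (monicP mon) rmorph1 oner_eq0.
- by rewrite (lead_coef_deriv_monic mon size_chi nz_aR) rmorph_nat.
Qed.

Lemma det_disc_neq0 (F : fieldType) m (X : 'M[F]_m.+1) :
  (det_disc X != 0) = (X \in unitmx) && separable_poly (char_poly X).
Proof.
rewrite /det_disc mulf_eq0 negb_or unitmxE unitfE resultant_eq0 -leqNgt.
congr (_ && _); rewrite unlock /coprimep eqn_leq size_poly_gt0 gcdp_eq0 andbC.
by rewrite (negPf (monic_neq0 (char_poly_monic X))).
Qed.

Lemma det_disc_unitmx (F : fieldType) m (X : 'M[F]_m.+1) :
  det_disc X != 0 -> X \in unitmx.
Proof. by rewrite det_disc_neq0 => /andP[]. Qed.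

Lemma separable_mup_le1 (F L : fieldType) (f : {rmorphism F -> L}) (p : {poly F}) :
  separable_poly p -> forall z, (mup z (map_poly f p) <= 1)%N.
Proof.
move=> sep_p z; have sep_fp : separable_poly (map_poly f p).
  by move: sep_p; rewrite !unlock deriv_map coprimep_map.
have fp_neq0 : map_poly f p != 0.
  by rewrite map_poly_eq0; apply: contraTneq sep_p => ->; rewrite unlock deriv0 coprimep0 eqp01.
by rewrite -ltnS mup_ltn // (separable_nosquare sep_fp) // size_XsubC.
Qed.

Lemma det_disc_simple_spectrum (R : realType) (F : numFieldType) (toC : F -> R[i])
    (absF : F -> R) m (X : 'M[F]_m.+1) :
  RorC toC absF -> det_disc X != 0 -> X \in unitmx /\ simple_spectrum toC X.
Proof.
move=> HF; rewrite det_disc_neq0 => /andP[X_unit sep_chi]; split=> //.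
rewrite /simple_spectrum; move: (char_poly X) sep_chi; case: HF => p sep_p z.
  exact: (separable_mup_le1 (real_complex R) sep_p).
exact: (separable_mup_le1 (@idfun R[i]) sep_p).
Qed.

Definition iota_diag_mx (F : numFieldType) m : 'M[F]_m.+1 :=
  diag_mx (\row_(i < m.+1) (i.+1)%:R).

Lemma det_disc_iota_diag (F : numFieldType) m : det_disc (iota_diag_mx F m) != 0.
Proof.
rewrite det_disc_neq0 unitmxE unitfE det_diag char_poly_trig ?diag_mx_is_trig //.
apply/andP; split; first by apply/prodf_neq0 => i _; rewrite mxE pnatr_eq0.
rewrite (eq_bigr (fun i : 'I_m.+1 => 'X - ((i.+1)%:R)%:P)); last by move=> i _; rewrite !mxE eqxx.
rewrite -(big_map (fun i : 'I_m.+1 => (i.+1)%:R) xpredT (fun x => 'X - x%:P)).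
rewrite separable_prod_XsubC map_inj_uniq ?index_enum_uniq // => i j /eqP.
by rewrite eqr_nat eqSS => /eqP /val_inj.
Qed.

(** * Complete absolute values *)

(* The factor 2 in [abs_cauchy] accommodates F = C, whose limits are assembled from
   those of the real and imaginary parts. *)
Record complete_abs (R : realType) (F : numFieldType) (abs : F -> R) : Prop := {
  abs_ge0 : forall x, 0 <= abs x;
  abs_eq0 : forall x, abs x = 0 -> x = 0;
  absM : forall x y, abs (x * y) = abs x * abs y;
  absD : forall x y, abs (x + y) <= abs x + abs y;
  abs_nat : forall m : nat, abs m%:R = m%:R;
  abs_cauchy : forall (u : nat -> F) (C : R),
    (forall k l, (k <= l)%N -> abs (u k - u l) <= C / k.+1%:R) ->
    exists L, forall k, abs (u k - L) <= 2 * C / k.+1%:R }.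

Lemma real_cauchy (R : realType) (u : nat -> R) (C : R) :
  (forall k l, (k <= l)%N -> `|u k - u l| <= C / k.+1%:R) ->
  exists L, forall k, `|u k - L| <= C / k.+1%:R.
Proof.
move=> u_cauchy.
have C_ge0 : 0 <= C by have := u_cauchy 0%N 0%N (leqnn _); rewrite subrr normr0 divr1.
have eC_ge0 (j : nat) : 0 <= C / j.+1%:R by rewrite divr_ge0.
pose a l := u l - C / l.+1%:R.
have a_le k l : a l <= u k + C / k.+1%:R.
  have [kl|/ltnW lk] := leqP k l; [move: (u_cauchy k l kl) | move: (u_cauchy l k lk)];
  move: (eC_ge0 k) (eC_ge0 l); rewrite /a ler_norml;
  generalize (C / k.+1%:R) (C / l.+1%:R) => ck cl ? ? /andP[? ?]; lra.
pose E : set R := range a.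
have E_ub k : ubound E (u k + C / k.+1%:R) by move=> _ [l _ <-]; apply: a_le.
exists (sup E) => k.
have supE_le : sup E <= u k + C / k.+1%:R by apply: ge_sup => //; exists (a 0%N), 0%N.
have a_le_sup : a k <= sup E by apply: ub_le_sup; [exact: ex_intro _ _ (E_ub 0%N) | exists k].
rewrite ler_norml; move: supE_le a_le_sup; rewrite /a.
generalize (C / k.+1%:R) => c ? ?; apply/andP; split; lra.
Qed.

Lemma normc_ReIm (R : realType) (z : R[i]) :
  ComplexField.Normc.normc z <= `|complex.Re z| + `|complex.Im z|.
Proof.
case: z => a b /=.
rewrite -(ger0_norm (addr_ge0 (normr_ge0 a) (normr_ge0 b))) -sqrtr_sqr.
apply: ler_wsqrtr; rewrite sqrrD !real_normK ?num_real // -addrA lerD2l lerDr.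
by rewrite mulrn_wge0 // mulr_ge0.
Qed.

Lemma normc_Re (R : realType) (z : R[i]) : `|complex.Re z| <= ComplexField.Normc.normc z.
Proof. by case: z => a b /=; rewrite -sqrtr_sqr ler_wsqrtr // lerDl sqr_ge0. Qed.

Lemma normc_Im (R : realType) (z : R[i]) : `|complex.Im z| <= ComplexField.Normc.normc z.
Proof. by case: z => a b /=; rewrite -sqrtr_sqr ler_wsqrtr // lerDr sqr_ge0. Qed.

Lemma normc_cauchy (R : realType) (u : nat -> R[i]) (C : R) :
  (forall k l, (k <= l)%N -> ComplexField.Normc.normc (u k - u l) <= C / k.+1%:R) ->
  exists L, forall k, ComplexField.Normc.normc (u k - L) <= 2 * C / k.+1%:R.
Proof.
move=> u_cauchy.
have [Lr HLr] : exists Lr, forall k, `|complex.Re (u k) - Lr| <= C / k.+1%:R.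
  by apply: real_cauchy => k l kl; rewrite -raddfB (le_trans (normc_Re _)) ?u_cauchy.
have [Li HLi] : exists Li, forall k, `|complex.Im (u k) - Li| <= C / k.+1%:R.
  by apply: real_cauchy => k l kl; rewrite -raddfB (le_trans (normc_Im _)) ?u_cauchy.
exists (complex.Complex Lr Li) => k; apply: le_trans (normc_ReIm _) _.
by rewrite !raddfB /= -mulrA mulr2n mulrDl mul1r lerD.
Qed.

Lemma RorC_complete_abs (R : realType) (F : numFieldType) (toC : F -> R[i])
    (absF : F -> R) :
  RorC toC absF -> complete_abs absF.
Proof.
case; split.
- exact: normr_ge0.
- by move=> x /normr0_eq0.
- exact: normrM.
- exact: ler_normD.
- by move=> m; rewrite normr_nat.
- move=> u C /real_cauchy[L HL]; exists L => k; apply: le_trans (HL k) _.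
  have C_ge0 : 0 <= C by have := HL 0%N; rewrite divr1; apply: le_trans.
  by rewrite -mulrA ler_peMl ?ler1n ?divr_ge0.
- by case=> a b /=; apply: sqrtr_ge0.
- exact: ComplexField.Normc.eq0_normc.
- exact: ComplexField.Normc.normcM.
- exact: complex.le_normcD.
- by move=> m; rewrite -[m%:R]/(1 *+ m) complex.normcMn ComplexField.Normc.normc1.
- exact: normc_cauchy.
Qed.

Section CompleteAbs.
Variables (R : realType) (F : numFieldType) (absF : F -> R).
Hypothesis hA : complete_abs absF.

Lemma abs0 : absF 0 = 0. Proof. exact: (abs_nat hA 0). Qed.

Lemma absN x : absF (- x) = absF x.
Proof.
have absN1 : absF (-1) = 1.
  have sq1 : absF (-1) ^+ 2 = 1 ^+ 2.
    by rewrite expr2 -(absM hA) mulrNN mulr1 expr1n (abs_nat hA 1).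
  by move/eqP: sq1; rewrite eqrXn2 ?(abs_ge0 hA) // => /eqP.
by rewrite -mulN1r (absM hA) absN1 mul1r.
Qed.

Lemma abs_distC x y : absF (x - y) = absF (y - x).
Proof. by rewrite -absN opprB. Qed.

Lemma abs_inv_succ (k : nat) : absF (k.+1%:R^-1) = k.+1%:R^-1.
Proof.
have := absM hA k.+1%:R^-1 k.+1%:R.
rewrite mulVf ?pnatr_eq0 // (abs_nat hA 1) (abs_nat hA) => /esym inv_k.
have k1_neq0 : k.+1%:R != 0 :> R by rewrite pnatr_eq0.
by apply: (mulIf k1_neq0); rewrite inv_k mulVf.
Qed.

End CompleteAbs.

(** * Norms on matrices bound the entries *)

Lemma le_div_succ_eq0 (R : archiFieldType) (z c : R) :
  0 <= z -> (forall k : nat, z <= c / k.+1%:R) -> z = 0.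
Proof.
move=> z_ge0 z_le; apply/eqP; rewrite eq_le z_ge0 andbT leNgt; apply/negP => z_gt0.
have c_ge0 : 0 <= c by have := z_le 0%N; rewrite divr1; apply: le_trans.
pose k := Num.Def.archi_bound (c / z).
have c_lt : c < k%:R * z by rewrite -ltr_pdivrMr // archi_boundP // divr_ge0 // ltW.
have := z_le k; rewrite ler_pdivlMr ?ltr0Sn // => /le_lt_trans/(_ c_lt).
by rewrite [X in _ < X]mulrC ltr_pM2l // ltr_nat ltnNge leqnSn.
Qed.

Section MxNorm.
Variables (R : realType) (F : numFieldType) (absF : F -> R) (p : nat) (N : 'M[F]_p -> R).
Hypotheses (hA : complete_abs absF) (hN : mx_norm absF N).

Lemma mx_norm_ge0 X : 0 <= N X. Proof. by case: hN. Qed.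

Lemma mx_norm_eq0 X : N X = 0 -> X = 0. Proof. by case: hN => _ + _ _; apply. Qed.

Lemma mx_normZ a X : N (a *: X) = absF a * N X. Proof. by case: hN. Qed.

Lemma mx_normD X Y : N (X + Y) <= N X + N Y. Proof. by case: hN. Qed.

Lemma mx_normN X : N (- X) = N X.
Proof. by rewrite -scaleN1r mx_normZ (absN hA) (abs_nat hA 1) mul1r. Qed.

Lemma mx_norm_distC X Y : N (X - Y) = N (Y - X).
Proof. by rewrite -mx_normN opprB. Qed.

Lemma mx_norm_sum (I : Type) (r : seq I) (G : I -> 'M[F]_p) :
  N (\sum_(i <- r) G i) <= \sum_(i <- r) N (G i).
Proof.
elim: r => [|x r IH]; last by rewrite !big_cons (le_trans (mx_normD _ _)) ?lerD2l.
by rewrite !big_nil -(scale0r 0) mx_normZ (abs0 hA) mul0r.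
Qed.

Lemma delta_pairE (x y : 'I_p * 'I_p) : delta_mx x.1 x.2 y.1 y.2 = (y == x)%:R :> F.
Proof. by case: x y => [a b] [c d]; rewrite mxE /= xpair_eqE. Qed.

Lemma mx_norm_le_coords X :
  N X <= \sum_(x : 'I_p * 'I_p) absF (X x.1 x.2) * N (delta_mx x.1 x.2).
Proof.
rewrite {1}[X]matrix_sum_delta pair_bigA /=.
by apply: le_trans (mx_norm_sum _ _) _; apply: ler_sum => x _; rewrite mx_normZ.
Qed.

Definition supported (s : seq ('I_p * 'I_p)) (X : 'M[F]_p) :=
  forall x, x \notin s -> X x.1 x.2 = 0.

Definition coord_bounded (s : seq ('I_p * 'I_p)) (K : R) :=
  forall X, supported s X -> forall x, absF (X x.1 x.2) <= K * N X.

Lemma supported_complete s (K : R) (Y : nat -> 'M[F]_p) (C : R) :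
  0 <= K -> coord_bounded s K -> (forall k, supported s (Y k)) ->
  (forall k l, (k <= l)%N -> N (Y k - Y l) <= C / k.+1%:R) ->
  exists2 Ys, supported s Ys & exists C', forall k, N (Ys - Y k) <= C' / k.+1%:R.
Proof.
move=> K_ge0 K_bnd Y_supp Y_cauchy.
have C_ge0 : 0 <= C.
  by have := Y_cauchy 0%N 0%N isT; rewrite divr1; apply: le_trans; apply: mx_norm_ge0.
have coord_cauchy x k l : (k <= l)%N ->
    absF (Y k x.1 x.2 - Y l x.1 x.2) <= K * C / k.+1%:R.
  move=> kl; have Ykl_supp : supported s (Y k - Y l).
    by move=> y ys; rewrite !mxE !Y_supp // subrr.
  move: (K_bnd _ Ykl_supp x); rewrite !mxE -mulrA => /le_trans; apply.
  by rewrite ler_wpM2l // Y_cauchy.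
have /choice[L HL] : forall x, exists L, forall k, absF (Y k x.1 x.2 - L) <= 2 * (K * C) / k.+1%:R.
  by move=> x; apply: (abs_cauchy hA) => k l; apply: coord_cauchy.
pose S := \sum_(x : 'I_p * 'I_p) N (delta_mx x.1 x.2).
exists (\matrix_(i, j) if (i, j) \in s then L (i, j) else 0).
  by case=> i j ijs; rewrite mxE (negPf ijs).
exists (2 * (K * C) * S) => k; apply: le_trans (mx_norm_le_coords _) _.
rewrite mulrAC /S mulr_sumr; apply: ler_sum => -[i j] _; rewrite ler_wpM2r ?mx_norm_ge0 //.
rewrite !mxE /=; case: ifP => ijs; first by rewrite (abs_distC hA) (HL (i, j)).
by rewrite (Y_supp k (i, j)) ?ijs // subrr (abs0 hA) !mulr_ge0 ?invr_ge0.
Qed.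

Lemma supported_dist_gt0 s (K : R) x0 :
  0 <= K -> coord_bounded s K -> x0 \notin s ->
  exists2 d, 0 < d & forall Y, supported s Y -> d <= N (delta_mx x0.1 x0.2 + Y).
Proof.
move=> K_ge0 K_bnd x0s; set E := delta_mx x0.1 x0.2.
have [//|no_d] := pselect (exists2 d, 0 < d & forall Y, supported s Y -> d <= N (E + Y)).
(* Otherwise -E is a limit of matrices supported on s, hence supported on s. *)
have /choice[Y /all_and2[Y_supp Y_near]] :
    forall k, exists Y, supported s Y /\ N (E + Y) < k.+1%:R^-1.
  move=> k; apply/not_existsP => no_Y; apply: no_d; exists k.+1%:R^-1 => [|Y Y_supp].
    by rewrite invr_gt0 ltr0Sn.
  by rewrite leNgt; apply/negP => lt; apply: (no_Y Y).
have Y_cauchy k l : (k <= l)%N -> N (Y k - Y l) <= 2 / k.+1%:R.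
  move=> kl; have -> : Y k - Y l = (E + Y k) - (E + Y l) by rewrite opprD addrACA subrr add0r.
  have -> : 2 / k.+1%:R = k.+1%:R^-1 + k.+1%:R^-1 :> R by ring.
  rewrite (le_trans (mx_normD _ _)) // mx_normN; apply: lerD; first exact/ltW/Y_near.
  by rewrite ltW // (lt_le_trans (Y_near l)) // lef_pV2 ?posrE // ler_nat.
have [Ys Ys_supp [C' Ys_lim]] := supported_complete K_ge0 K_bnd Y_supp Y_cauchy.
have /mx_norm_eq0 EYs_eq0 : N (E + Ys) = 0.
  apply: (@le_div_succ_eq0 _ _ (1 + C') (mx_norm_ge0 _)) => k.
  have -> : E + Ys = (E + Y k) + (Ys - Y k) by rewrite addrACA subrr addr0.
  rewrite mulrDl mul1r (le_trans (mx_normD _ _)) //.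
  exact: lerD (ltW (Y_near k)) (Ys_lim k).
have /eqP := congr1 (fun M : 'M_p => M x0.1 x0.2) EYs_eq0.
by rewrite !mxE !eqxx Ys_supp // addr0 oner_eq0.
Qed.

Lemma coord_bounded_cons s (K : R) x0 :
  0 <= K -> coord_bounded s K -> x0 \notin s ->
  exists2 K', 0 <= K' & coord_bounded (x0 :: s) K'.
Proof.
move=> K_ge0 K_bnd x0s; pose E : 'M[F]_p := delta_mx x0.1 x0.2.
have [d d_gt0 d_le] := supported_dist_gt0 K_ge0 K_bnd x0s.
have NE_ge0 := mx_norm_ge0 E.
exists (K * (1 + N E / d) + d^-1).
  by have d_ge0 := ltW d_gt0; rewrite addr_ge0 ?invr_ge0 // mulr_ge0 // addr_ge0 // divr_ge0.
move=> X X_supp x; set a := X x0.1 x0.2; set Y := X - a *: E.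
have YE y : Y y.1 y.2 = X y.1 y.2 - a * (y == x0)%:R by rewrite !mxE -delta_pairE.
have Y_supp : supported s Y.
  move=> y ys; rewrite YE; have [->|yx0] := eqVneq y x0; first by rewrite mulr1 subrr.
  by rewrite mulr0 subr0 X_supp // in_cons negb_or yx0.
have a_le : absF a <= N X / d.
  rewrite ler_pdivlMr //; have [->|a_neq0] := eqVneq a 0.
    by rewrite (abs0 hA) mul0r mx_norm_ge0.
  have -> : X = a *: (E + a^-1 *: Y).
    by rewrite scalerDr scalerA (mulfV a_neq0) scale1r addrC subrK.
  rewrite mx_normZ ler_wpM2l ?(abs_ge0 hA) // d_le // => y ys.
  by rewrite mxE Y_supp ?mulr0.
have NY_le : N Y <= N X + N X / d * N E.
  by rewrite (le_trans (mx_normD _ _)) // mx_normN mx_normZ lerD2l ler_wpM2r.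
have Xx_le : absF (X x.1 x.2) <= absF (Y x.1 x.2) + absF a.
  rewrite YE -{1}(subrK (a * (x == x0)%:R) (X x.1 x.2)) (le_trans (absD hA _ _)) //.
  rewrite lerD2l (absM hA) (abs_nat hA); case: (x == x0); first by rewrite mulr1.
  by rewrite mulr0 (abs_ge0 hA).
have -> : (K * (1 + N E / d) + d^-1) * N X = K * (N X + N X / d * N E) + N X / d.
  by ring.
by rewrite (le_trans Xx_le) // lerD // (le_trans (K_bnd _ Y_supp x)) // ler_wpM2l.
Qed.

Lemma mx_norm_coord_bound :
  exists2 K, 0 <= K & forall (X : 'M[F]_p) i j, absF (X i j) <= K * N X.
Proof.
suff [K K_ge0 K_bnd] : exists2 K, 0 <= K & coord_bounded (enum {: 'I_p * 'I_p}) K.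
  by exists K => // X i j; apply: (K_bnd X _ (i, j)) => x; rewrite mem_enum.
elim: (enum _) => [|x0 s [K K_ge0 K_bnd]].
  exists 0 => // X X_supp x; have -> : X = 0.
    by apply/matrixP => i j; rewrite mxE (X_supp (i, j)).
  by rewrite mxE (abs0 hA) mul0r.
have [x0s|x0s] := boolP (x0 \in s).
  exists K => // X X_supp; apply: K_bnd => y ys; apply: X_supp.
  by rewrite in_cons negb_or ys andbT; apply: contraNneq ys => ->.
exact: coord_bounded_cons K_ge0 K_bnd x0s.
Qed.

End MxNorm.

(** * Openness and density of the simple-spectrum locus *)

Section AbsContinuity.
Variables (R : realType) (F : numFieldType) (absF : F -> R).
Hypothesis hA : complete_abs absF.
Variables (m : nat) (v0 : 'I_m -> F).

Definition abs_continuous_at (g : ('I_m -> F) -> F) :=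
  forall e : R, 0 < e -> exists2 eta : R, 0 < eta &
    forall v, (forall i, absF (v i - v0 i) < eta) -> absF (g v - g v0) < e.

Lemma abs_continuous_cst c : abs_continuous_at (fun _ => c).
Proof. by move=> e e_gt0; exists 1 => // v _; rewrite subrr (abs0 hA). Qed.

Lemma abs_continuous_proj i : abs_continuous_at (fun v => v i).
Proof. by move=> e e_gt0; exists e. Qed.

Lemma abs_near_min (e1 e2 : R) v :
  (forall i, absF (v i - v0 i) < Num.min e1 e2) ->
  (forall i, absF (v i - v0 i) < e1) /\ (forall i, absF (v i - v0 i) < e2).
Proof. by move=> v_near; split=> i; have := v_near i; rewrite lt_min => /andP[]. Qed.

Lemma abs_continuousD g h :
  abs_continuous_at g -> abs_continuous_at h -> abs_continuous_at (fun v => g v + h v).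
Proof.
move=> g_cont h_cont e e_gt0; have e2_gt0 : 0 < e / 2 by rewrite divr_gt0.
have [e1 e1_gt0 g_near] := g_cont _ e2_gt0; have [e2 e2_gt0' h_near] := h_cont _ e2_gt0.
exists (Num.min e1 e2); first by rewrite lt_min e1_gt0.
move=> v /abs_near_min[/g_near gv /h_near hv].
rewrite opprD addrACA (le_lt_trans (absD hA _ _)) //.
by rewrite [e]splitr ltrD.
Qed.

Lemma abs_continuousM g h :
  abs_continuous_at g -> abs_continuous_at h -> abs_continuous_at (fun v => g v * h v).
Proof.
move=> g_cont h_cont e e_gt0.
set A := absF (g v0); set B := absF (h v0).
have A_ge0 : 0 <= A := abs_ge0 hA _; have B_ge0 : 0 <= B := abs_ge0 hA _.
have AB1_gt0 : 0 < A + B + 1 by rewrite ltr_wpDl ?addr_ge0.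
pose d := Num.min 1 (e / (A + B + 1)).
have d_gt0 : 0 < d by rewrite lt_min ltr01 divr_gt0.
have d_le1 : d <= 1 by rewrite ge_min lexx.
have d_small : d * (A + B + 1) <= e.
  by rewrite -ler_pdivlMr // ge_min lexx orbT.
have [e1 e1_gt0 g_near] := g_cont _ d_gt0; have [e2 e2_gt0 h_near] := h_cont _ d_gt0.
exists (Num.min e1 e2); first by rewrite lt_min e1_gt0.
move=> v /abs_near_min[/g_near gv /h_near hv].
have -> : g v * h v - g v0 * h v0 =
    (g v - g v0) * (h v - h v0) + (g v0 * (h v - h v0) + (g v - g v0) * h v0) by ring.
rewrite (le_lt_trans (absD hA _ _)) // (le_lt_trans (lerD (lexx _) (absD hA _ _))) //.
move: (abs_ge0 hA (g v - g v0)) (abs_ge0 hA (h v - h v0)) gv hv.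
rewrite !(absM hA) -/A -/B; generalize (absF (g v - g v0)) (absF (h v - h v0)) => x y.
nra.
Qed.

Lemma abs_continuous_sum (I : Type) (r : seq I) (G : I -> ('I_m -> F) -> F) :
  (forall i, abs_continuous_at (G i)) -> abs_continuous_at (fun v => \sum_(i <- r) G i v).
Proof.
move=> G_cont; elim: r => [|i r IH].
  by under eq_fun do rewrite big_nil; apply: abs_continuous_cst.
by under eq_fun do rewrite big_cons; apply: abs_continuousD.
Qed.

Lemma abs_continuous_prod (I : Type) (r : seq I) (G : I -> ('I_m -> F) -> F) :
  (forall i, abs_continuous_at (G i)) -> abs_continuous_at (fun v => \prod_(i <- r) G i v).
Proof.
move=> G_cont; elim: r => [|i r IH].
  by under eq_fun do rewrite big_nil; apply: abs_continuous_cst.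
by under eq_fun do rewrite big_cons; apply: abs_continuousM.
Qed.

Lemma abs_continuousX g k : abs_continuous_at g -> abs_continuous_at (fun v => g v ^+ k).
Proof.
move=> g_cont; elim: k => [|k IH].
  by under eq_fun do rewrite expr0; apply: abs_continuous_cst.
by under eq_fun do rewrite exprS; apply: abs_continuousM.
Qed.

Lemma abs_continuous_meval (q : {mpoly F[m]}) : abs_continuous_at (fun v => q.@[v]).
Proof.
under eq_fun do rewrite mevalE.
apply: abs_continuous_sum => mm; apply: abs_continuousM; first exact: abs_continuous_cst.
by apply: abs_continuous_prod => i; apply/abs_continuousX/abs_continuous_proj.
Qed.

End AbsContinuity.

Section DetDiscNorm.
Variables (R : realType) (F : numFieldType) (absF : F -> R) (n : nat) (N : 'M[F]_n.+1 -> R).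
Hypotheses (hA : complete_abs absF) (hN : mx_norm absF N).

Definition mx_coords (X : 'M[F]_n.+1) : 'I_(n.+1 * n.+1) -> F := fun k => mxvec X 0 k.

Definition generic_mx : 'M[{mpoly F[n.+1 * n.+1]}]_n.+1 :=
  \matrix_(i, j) 'X_(mxvec_index i j).

Lemma det_disc_meval (X : 'M[F]_n.+1) : det_disc X = (det_disc generic_mx).@[mx_coords X].
Proof.
have n1_neq0 : n.+1%:R != 0 :> F by rewrite pnatr_eq0.
rewrite (rmorph_det_disc _ _ n1_neq0); congr det_disc.
by apply/matrixP => i j; rewrite !mxE [RHS](mevalXU (mx_coords X)) /mx_coords mxvecE.
Qed.

Lemma det_disc_neq0_near (X0 : 'M[F]_n.+1) : det_disc X0 != 0 ->
  exists2 r, 0 < r & forall X, N (X - X0) < r -> det_disc X != 0.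
Proof.
move=> X0_disc.
have abs_gt0 : 0 < absF (det_disc X0).
  by rewrite lt_def (abs_ge0 hA) andbT; apply: contra X0_disc => /eqP/(abs_eq0 hA)->.
have [eta eta_gt0 eta_near] := abs_continuous_meval hA (mx_coords X0) (det_disc generic_mx) abs_gt0.
have [K K_ge0 K_bnd] := mx_norm_coord_bound hA hN.
exists (eta / (K + 1)) => [|X XX0_lt]; first by rewrite divr_gt0 // ltr_wpDl.
have coords_near k : absF (mx_coords X k - mx_coords X0 k) < eta.
  case/mxvec_indexP: k => i j; rewrite /mx_coords !mxvecE.
  have := K_bnd (X - X0) i j; rewrite !mxE => /le_lt_trans; apply.
  move: XX0_lt; rewrite ltr_pdivlMr ?ltr_wpDl // => /(le_lt_trans _); apply.
  by rewrite mulrC ler_wpM2l ?(mx_norm_ge0 hN) // lerDl.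
have := eta_near _ coords_near; rewrite -!det_disc_meval.
by apply: contraTneq => ->; rewrite sub0r (absN hA) ltxx.
Qed.

Lemma det_disc_segment_poly (M : 'M[F]_n.+1) : exists2 q : {poly F}, q != 0 &
  forall t, q.[t] = det_disc (M + t *: (iota_diag_mx F n - M)).
Proof.
pose D := iota_diag_mx F n.
pose Mt : 'M[{poly F}]_n.+1 := map_mx polyC M + 'X *: map_mx polyC (D - M).
have Mt_eval t : (det_disc Mt).[t] = det_disc (M + t *: (D - M)).
  have n1_neq0 : n.+1%:R != 0 :> F by rewrite pnatr_eq0.
  rewrite -horner_evalE (rmorph_det_disc _ _ n1_neq0).
  by congr det_disc; apply/matrixP => i j; rewrite !mxE /= horner_evalE !hornerE.
exists (det_disc Mt) => //; apply: contra (det_disc_iota_diag F n) => /eqP Mt_eq0.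
by rewrite -/D -[D](addrNK M) addrC -[X in _ + X]scale1r -Mt_eval Mt_eq0 horner0.
Qed.

Lemma det_disc_segment_small (M : 'M[F]_n.+1) (c d : R) : 0 <= c -> 0 < d ->
  exists2 t : F, absF t * c < d & det_disc (M + t *: (iota_diag_mx F n - M)) != 0.
Proof.
move=> c_ge0 d_gt0; have [q q_neq0 q_eval] := det_disc_segment_poly M.
pose k0 := Num.Def.archi_bound (c / d).
have k0_gt : c / d < k0%:R by rewrite archi_boundP // divr_ge0 // ltW.
pose ts := [seq (k0 + j).+1%:R^-1 | j <- iota 0 (size q)] : seq F.
have /allPn[_ /mapP[j _ ->] not_root] : ~~ all (root q) ts.
  apply: contraTN isT => /(max_poly_roots q_neq0); rewrite size_map size_iota ltnn.
  apply; rewrite map_inj_uniq ?iota_uniq // => a b /invr_inj/eqP.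
  by rewrite eqr_nat eqSS eqn_add2l => /eqP.
exists (k0 + j).+1%:R^-1; last by rewrite -q_eval.
rewrite (abs_inv_succ hA) mulrC ltr_pdivrMr ?ltr0Sn //.
move: k0_gt; rewrite ltr_pdivrMr // => /lt_le_trans; apply.
by rewrite mulrC ler_wpM2l ?(ltW d_gt0) // ler_nat -addnS leq_addr.
Qed.

Lemma det_disc_dense_conj (L Rm Y0 : 'M[F]_n.+1) (r : R) :
  L \is a GRing.unit -> Rm \is a GRing.unit -> 0 < r ->
  exists2 Y, N (Y - Y0) < r & det_disc (L * Y * Rm) != 0.
Proof.
move=> L_unit Rm_unit r_gt0; set D := iota_diag_mx F n; set M := L * Y0 * Rm.
pose V := L^-1 * (D - M) * Rm^-1.
have [t t_small t_disc] := det_disc_segment_small M (mx_norm_ge0 hN V) r_gt0.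
exists (Y0 + t *: V); first by rewrite addrC addKr (mx_normZ hN).
suff -> : L * (Y0 + t *: V) * Rm = M + t *: (D - M) by [].
by rewrite mulrDr mulrDl -scalerAr -scalerAl /V !mulrA mulrV // mul1r mulrVK.
Qed.

Lemma det_disc_dense (A : 'M[F]_n.+1) (eps : R) :
  0 < eps -> exists2 B, N (B - A) < eps & det_disc B != 0.
Proof.
move=> eps_gt0; have [B ? B_disc] := det_disc_dense_conj A (unitr1 _) (unitr1 _) eps_gt0.
by rewrite mul1r mulr1 in B_disc; exists B.
Qed.

Lemma det_disc_ball_GL_open (A : 'M[F]_n.+1) (eps : R) :
  GL_open N (fun X => det_disc X != 0 /\ N (X - A) < eps).
Proof.
split=> [X [/det_disc_unitmx //]|X [X_disc XA_lt]].
have [r r_gt0 r_near] := det_disc_neq0_near X_disc.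
exists (Num.min r (eps - N (X - A))); split; first by rewrite lt_min r_gt0 subr_gt0.
move=> Y _; rewrite lt_min => /andP[YX_lt_r YX_lt]; split; first exact: r_near.
have -> : Y - A = (Y - X) + (X - A) by rewrite addrA subrK.
by rewrite (le_lt_trans (mx_normD hN _ _)) // -ltrBrDr.
Qed.

End DetDiscNorm.

Lemma prod_update_split (R : unitRingType) (I : eqType) (r : seq I) (i0 : I)
    (c : I -> R) :
  uniq r -> i0 \in r -> (forall i, c i \is a GRing.unit) ->
  exists L Rm, [/\ L \is a GRing.unit, Rm \is a GRing.unit &
    forall Y, \prod_(i <- r) (if i == i0 then Y else c i) = L * Y * Rm].
Proof.
move=> uniq_r i0r c_unit; case/splitPr: i0r uniq_r => r1 r2.
rewrite cat_uniq /= negb_or => /and4P[_ /andP[i0r1 _] i0r2 _].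
have keep s Y : i0 \notin s ->
    \prod_(i <- s) (if i == i0 then Y else c i) = \prod_(i <- s) c i.
  by move=> i0s; apply: eq_big_seq => i i_s; case: eqP => // ei; rewrite -ei i_s in i0s.
exists (\prod_(i <- r1) c i), (\prod_(i <- r2) c i).
split; [exact: unitr_prod | exact: unitr_prod |].
by move=> Y; rewrite big_cat big_cons eqxx !keep // -mulrA.
Qed.

Theorem proposition3 (R : realType) (F : numFieldType) (toC : F -> R[i])
  (absF : F -> R) (HF : @RorC R F toC absF)
  (n k : nat) (N : 'M[F]_n.+1 -> R) (HN : mx_norm absF N)
  (hk : (0 < k)%N)
  (f : 'I_k -> 'M[F]_n.+1 -> 'M[F]_n.+1)
  (hf : forall i, GL_map (f i))
  (hopen : exists i, open_GL_map N (f i))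
  (A : 'I_k -> 'M[F]_n.+1) (eps : R) (heps : 0 < eps) :
  exists Aeps : 'I_k -> 'M[F]_n.+1,
    (forall i, [/\ Aeps i \in unitmx, simple_spectrum toC (Aeps i)
                 & N (A i - Aeps i) < eps]) /\
    simple_spectrum toC (\prod_(i < k) f i (Aeps i)).
Proof.
have hA := RorC_complete_abs HF; have [i0 f_open] := hopen.
have /choice[B B_near] i : exists B, N (B - A i) < eps /\ det_disc B != 0.
  by have [B] := det_disc_dense hA HN (A i) heps; exists B.
pose U X := det_disc X != 0 /\ N (X - A i0) < eps.
have [_ fU_open] := f_open U (det_disc_ball_GL_open hA HN (A i0) eps).
have [|r [r_gt0 fU_near]] := fU_open (f i0 (B i0)).
  by exists (B i0); split=> //; split; case: (B_near i0).
have f_unit i : f i (B i) \is a GRing.unit by apply/hf/det_disc_unitmx; case: (B_near i).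
have [L [Rm [L_unit Rm_unit prodE]]] :=
  prod_update_split (index_enum_uniq 'I_k) (mem_index_enum i0) f_unit.
have [Y Y_near Y_disc] := det_disc_dense_conj hA HN (f i0 (B i0)) L_unit Rm_unit r_gt0.
have Y_unit : Y \in unitmx.
  by rewrite -(unitrMr _ L_unit) -(unitrMl _ Rm_unit) det_disc_unitmx.
have [X [[X_disc X_near] fX]] := fU_near Y Y_unit Y_near.
exists (fun i => if i == i0 then X else B i); split.
  move=> i; rewrite (mx_norm_distC hA HN); case: eqP => [->|_].
    by have [] := det_disc_simple_spectrum HF X_disc.
  by case: (B_near i) => ? /(det_disc_simple_spectrum HF)[].
have -> : \prod_(i < k) f i (if i == i0 then X else B i) =
    \prod_(i <- index_enum 'I_k) (if i == i0 then Y else f i (B i)).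
  by apply: eq_bigr => i _; case: eqP => [->|]; rewrite ?fX.
by rewrite prodE; case: (det_disc_simple_spectrum HF Y_disc).
Qed.
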